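(* Let $n\geq 1$, $m=\frac{n^2+n}{2}$, and let $z:\mathbb{R}^n\to\mathbb{R}^m$ be the map $z(x)=\begin{bmatrix}x_1^2 & x_1x_2 & \cdots & x_1x_n & x_2^2 & x_2x_3 & \cdots & x_n^2\end{bmatrix}^\top$ listing all quadratic monomials of $x$; write $w=z(x)$ and $w_\ell$ for its $\ell$-th entry. Let $E=E^\top\in\mathbb{R}^{n\times n}$ be positive definite, $\alpha>0$, and $\mathcal{E}_\alpha=\{x : x^\top E x\leq\alpha^2\}$. Let $p,q\in\{1,\dots,m\}$ be indices such that $w_pw_q=x_i^2x_jx_k$ (as polynomials in $x$) for some $i,j,k\in\{1,\dots,n\}$ with $j\neq k$. Let $S_{pq}=\bar e_p\bar e_q^\top+\bar e_q\bar e_p^\top\in\mathbb{R}^{m\times m}$. Then the following four quadratic constraints hold for all $x\in\mathcal{E}_\alpha$ with $w=z(x)$: (i) with $d=e_j+e_k$ and $W$ equal to either $(e_i^\top E^{-1}e_i)\,dd^\top$ or $(d^\top E^{-1}d)\,e_ie_i^\top$, $$\begin{bmatrix} x\\ w\end{bmatrix}^\top\begin{bmatrix}\alpha^2 W & 0\\ 0 & -S_{pq}\end{bmatrix}\begin{bmatrix} x\\ w\end{bmatrix}\geq 0;$$ (ii) with $d=e_j-e_k$ and $W$ equal to either $(e_i^\top E^{-1}e_i)\,dd^\top$ or $(d^\top E^{-1}d)\,e_ie_i^\top$, $$\begin{bmatrix} x\\ w\end{bmatrix}^\top\begin{bmatrix}\alpha^2 W & 0\\ 0 & S_{pq}\end{bmatrix}\begin{bmatrix}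 x\\ w\end{bmatrix}\geq 0.$$
   Context: $e_1,\dots,e_n$ denote the standard basis vectors of $\mathbb{R}^n$ and $\bar e_1,\dots,\bar e_m$ the standard basis vectors of $\mathbb{R}^m$. The index $i$ may coincide with $j$ or $k$. *)

From HB Require Import structures.
From mathcomp Require Import all_boot all_order all_algebra.
From mathcomp Require Import mpoly.
Unset Printing Implicit Defensive.
Import Order.TTheory GRing.Theory Num.Theory.
Local Open Scope ring_scope.

Definition zdim (n : nat) : nat := ((n * n + n) %/ 2)%N.

(* The quadratic monomials x_a x_b, a <= b, in the order
   x_1^2, x_1x_2, ..., x_1x_n, x_2^2, x_2x_3, ..., x_n^2 (row-major). *)
Definition zpolys (R : realFieldType) (n : nat) : seq {mpoly R[n]} :=
  flatten [seq [seq ('X_a * 'X_b : {mpoly R[n]}) | b <- filter (fun b : 'I_n => (a <= b)%N) (enum 'I_n)] | a <- enum 'I_n].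

Definition zpoly (R : realFieldType) (n : nat) (l : 'I_(zdim n)) : {mpoly R[n]} :=
  (zpolys R n)`_l.

Definition zmap (R : realFieldType) (n : nat) (x : 'cV[R]_n) : 'cV[R]_(zdim n) :=
  \col_(l < zdim n) (zpoly R n l).@[fun i => x i 0].

Definition ebasis (R : realFieldType) (n : nat) (i : 'I_n) : 'cV[R]_n := delta_mx i 0.

Definition sc (R : realFieldType) (A : 'M[R]_1) : R := A 0 0.

Definition posdef (R : realFieldType) (n : nat) (E : 'M[R]_n) : Prop :=
  E^T = E /\ forall v : 'cV[R]_n, v != 0 -> 0 < sc R (v^T *m E *m v).

Definition Spq (R : realFieldType) (m : nat) (p q : 'I_m) : 'M[R]_m :=
  ebasis R m p *m (ebasis R m q)^T + ebasis R m q *m (ebasis R m p)^T.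

Definition qc (R : realFieldType) (n m : nat) (x : 'cV[R]_n) (w : 'cV[R]_m)
  (alpha : R) (W : 'M[R]_n) (S : 'M[R]_m) : R :=
  sc R ((col_mx x w)^T *m block_mx (alpha ^+ 2 *: W) 0 0 S *m col_mx x w).

Definition W1 (R : realFieldType) (n : nat) (E : 'M[R]_n) (i : 'I_n) (d : 'cV[R]_n) : 'M[R]_n :=
  sc R ((ebasis R n i)^T *m invmx E *m ebasis R n i) *: (d *m d^T).
Definition W2 (R : realFieldType) (n : nat) (E : 'M[R]_n) (i : 'I_n) (d : 'cV[R]_n) : 'M[R]_n :=
  sc R (d^T *m invmx E *m d) *: (ebasis R n i *m (ebasis R n i)^T).

(** For every vector [v], Cauchy-Schwarz in the inner product defined by [E]
    applied to [E^-1 v] and [x] gives [(v^T x)^2 <= (v^T E^-1 v) (x^T E x)], so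
    on the ellipsoid [(v^T x)^2 <= alpha^2 v^T E^-1 v].  Taking [v = e_i] or
    [v = d] shows that both choices of [W] satisfy
    [alpha^2 x^T W x >= (x_i d^T x)^2 = x_i^2 (x_j +- x_k)^2], while
    [w^T S_pq w = 2 w_p w_q = 2 x_i^2 x_j x_k]; the four constraints then reduce
    to [x_i^2 (x_j^2 + x_k^2) >= 0]. *)

From HB Require Import structures.
From mathcomp Require Import all_boot all_order all_algebra.
From mathcomp Require Import mpoly.
From mathcomp Require Import ring.
Import Order.TTheory GRing.Theory Num.Theory.
Local Open Scope ring_scope.

Set Implicit Arguments.
Unset Strict Implicit.

Section ScalarMatrices.
Context {R : realFieldType}.

Lemma sc0 : sc R 0 = 0.
Proof. by rewrite /sc mxE. Qed.

Lemma scD (a b : 'M[R]_1) : sc R (a + b) = sc R a + sc R b.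
Proof. by rewrite /sc mxE. Qed.

Lemma scN (a : 'M[R]_1) : sc R (- a) = - sc R a.
Proof. by rewrite /sc mxE. Qed.

Lemma scZ c (a : 'M[R]_1) : sc R (c *: a) = c * sc R a.
Proof. by rewrite /sc mxE. Qed.

Lemma scM (a b : 'M[R]_1) : sc R (a *m b) = sc R a * sc R b.
Proof. by rewrite /sc mxE big_ord1. Qed.

Lemma sc_tr (a : 'M[R]_1) : sc R a^T = sc R a.
Proof. by rewrite /sc mxE. Qed.

Lemma sc_dotC n (u v : 'cV[R]_n) : sc R (u^T *m v) = sc R (v^T *m u).
Proof. by rewrite -sc_tr trmx_mul trmxK. Qed.

Lemma sc_ebasis_dot n (i : 'I_n) (x : 'cV[R]_n) :
  sc R ((ebasis R n i)^T *m x) = x i 0.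
Proof. by rewrite /ebasis trmx_delta -rowE /sc mxE. Qed.

Lemma sc_quad_rank1 n (x d : 'cV[R]_n) c :
  sc R (x^T *m (c *: (d *m d^T)) *m x) = c * sc R (d^T *m x) ^+ 2.
Proof.
rewrite -scalemxAr -scalemxAl scZ !mulmxA -(mulmxA _ _ x) scM.
by rewrite sc_dotC expr2.
Qed.

Lemma sc_quad_Spq m (w : 'cV[R]_m) p q :
  sc R (w^T *m Spq R m p q *m w) = 2 * (w p 0 * w q 0).
Proof.
rewrite /Spq mulmxDr mulmxDl scD !mulmxA -!(mulmxA _ _ w) !scM.
by rewrite !(sc_dotC w) !sc_ebasis_dot; ring.
Qed.

Lemma qcE n m (x : 'cV[R]_n) (w : 'cV[R]_m) alpha W S :
  qc R n m x w alpha W S =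
  alpha ^+ 2 * sc R (x^T *m W *m x) + sc R (w^T *m S *m w).
Proof.
rewrite /qc tr_col_mx mul_row_block mul_row_col !mulmx0 addr0 add0r.
by rewrite scD -scalemxAr -scalemxAl scZ.
Qed.

End ScalarMatrices.

Section PositiveDefinite.
Context {R : realFieldType} {n : nat} {E : 'M[R]_n} (posE : posdef R n E).

Local Notation form a b := (sc R (a^T *m E *m b)).

Lemma posdef_form_ge0 v : 0 <= form v v.
Proof.
have [->|v_neq0] := eqVneq v 0; first by rewrite mulmx0 sc0.
exact/ltW/posE.2.
Qed.

Lemma posdef_formC a b : form a b = form b a.
Proof. by rewrite -sc_tr !trmx_mul trmxK posE.1 mulmxA. Qed.

Lemma form_subZl a b c y : form (a - c *: b) y = form a y - c * form b y.
Proof. by rewrite linearB linearZ /= !mulmxBl -!scalemxAl scD scN scZ. Qed.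

Lemma form_subZr a b c y : form y (a - c *: b) = form y a - c * form y b.
Proof. by rewrite mulmxBr -!scalemxAr scD scN scZ. Qed.

Lemma posdef_CauchySchwarz a b : form a b ^+ 2 <= form a a * form b b.
Proof.
have [->|b_neq0] := eqVneq b 0.
  by rewrite !mulmx0 sc0 expr0n mulr0.
have bb_gt0 : 0 < form b b by exact: posE.2.
pose c := form a b / form b b.
have := posdef_form_ge0 (a - c *: b).
rewrite form_subZl !form_subZr (posdef_formC b a).
have -> : form a a - c * form a b - c * (form a b - c * form b b)
          = form a a - form a b ^+ 2 / form b b.
  by rewrite /c; field; rewrite gt_eqF.
by rewrite subr_ge0 ler_pdivrMr.
Qed.

Lemma posdef_unitmx : E \in unitmx.
Proof.
rewrite -row_free_unit; apply: inj_row_free => u uE0; apply/eqP/contraT => u_neq0.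
have uT_neq0 : u^T != 0 by rewrite -(inj_eq (@trmx_inj _ _ _)) trmxK linear0.
by have := posE.2 _ uT_neq0; rewrite trmxK uE0 mul0mx sc0 ltxx.
Qed.

Lemma tr_invmx_mulmx k (v : 'M[R]_(n, k)) : (invmx E *m v)^T *m E = v^T.
Proof.
by rewrite trmx_mul trmx_inv posE.1 -mulmxA mulVmx ?mulmx1 ?posdef_unitmx.
Qed.

Lemma posdef_invmx : posdef R n (invmx E).
Proof.
split=> [|v v_neq0]; first by rewrite trmx_inv posE.1.
have u_neq0 : invmx E *m v != 0.
  by apply: contraNneq v_neq0 => u0; rewrite -(mulKVmx posdef_unitmx v) u0 mulmx0.
by have := posE.2 _ u_neq0; rewrite tr_invmx_mulmx mulmxA.
Qed.

Lemma sqr_dot_le_forms v x :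
  sc R (v^T *m x) ^+ 2 <= sc R (v^T *m invmx E *m v) * form x x.
Proof.
by have := posdef_CauchySchwarz (invmx E *m v) x; rewrite tr_invmx_mulmx mulmxA.
Qed.

End PositiveDefinite.

Section Ellipsoid.
Context {R : realFieldType} {n : nat} {E : 'M[R]_n} {alpha : R}.
Context (posE : posdef R n E).
Context {x : 'cV[R]_n} (x_in : sc R (x^T *m E *m x) <= alpha ^+ 2).

Lemma ellipsoid_sqr_dot_le v :
  sc R (v^T *m x) ^+ 2 <= alpha ^+ 2 * sc R (v^T *m invmx E *m v).
Proof.
rewrite mulrC; apply: le_trans (sqr_dot_le_forms posE v x) _.
by rewrite ler_wpM2l // (posdef_form_ge0 (posdef_invmx posE)).
Qed.

Lemma ellipsoid_W1_bound i d :
  (x i 0 * sc R (d^T *m x)) ^+ 2 <= alpha ^+ 2 * sc R (x^T *m W1 R n E i d *m x).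
Proof.
rewrite sc_quad_rank1 mulrA exprMn ler_wpM2r ?sqr_ge0 //.
by rewrite -(sc_ebasis_dot i) ellipsoid_sqr_dot_le.
Qed.

Lemma ellipsoid_W2_bound i d :
  (x i 0 * sc R (d^T *m x)) ^+ 2 <= alpha ^+ 2 * sc R (x^T *m W2 R n E i d *m x).
Proof.
rewrite sc_quad_rank1 sc_ebasis_dot mulrA exprMn [X in X <= _]mulrC.
rewrite ler_wpM2r ?sqr_ge0 //.
exact: ellipsoid_sqr_dot_le.
Qed.

End Ellipsoid.

Lemma zmap_mul (R : realFieldType) n {p q : 'I_(zdim n)} {P : {mpoly R[n]}}
  (x : 'cV[R]_n) :
  zpoly R n p * zpoly R n q = P ->
  zmap R n x p 0 * zmap R n x q 0 = P.@[fun l => x l 0].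
Proof. by move=> <-; rewrite !mxE mevalM. Qed.

Lemma sqr_mulD_ge (R : realFieldType) (a b c : R) :
  2 * (a ^+ 2 * b * c) <= (a * (b + c)) ^+ 2.
Proof.
rewrite -subr_ge0.
have -> : (a * (b + c)) ^+ 2 - 2 * (a ^+ 2 * b * c) = a ^+ 2 * (b ^+ 2 + c ^+ 2)
  by ring.
by rewrite mulr_ge0 ?addr_ge0 ?sqr_ge0.
Qed.

Lemma sqr_mulB_ge (R : realFieldType) (a b c : R) :
  - (2 * (a ^+ 2 * b * c)) <= (a * (b - c)) ^+ 2.
Proof.
rewrite -subr_ge0 opprK.
have -> : (a * (b - c)) ^+ 2 + 2 * (a ^+ 2 * b * c) = a ^+ 2 * (b ^+ 2 + c ^+ 2)
  by ring.
by rewrite mulr_ge0 ?addr_ge0 ?sqr_ge0.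
Qed.

Theorem theorem4 (R : realFieldType) (n : nat) (hn : (1 <= n)%N)
  (E : 'M[R]_n) (hE : posdef R n E) (alpha : R) (halpha : 0 < alpha)
  (p q : 'I_(zdim n)) (i j k : 'I_n) (hjk : j != k)
  (hpq : zpoly R n p * zpoly R n q = 'X_i ^+ 2 * 'X_j * 'X_k) :
  forall x : 'cV[R]_n, sc R (x^T *m E *m x) <= alpha ^+ 2 ->
  let w := zmap R n x in
  let dp := ebasis R n j + ebasis R n k in
  let dm := ebasis R n j - ebasis R n k in
  [/\ 0 <= qc R n (zdim n) x w alpha (W1 R n E i dp) (- Spq R (zdim n) p q),
      0 <= qc R n (zdim n) x w alpha (W2 R n E i dp) (- Spq R (zdim n) p q),
      0 <= qc R n (zdim n) x w alpha (W1 R n E i dm) (Spq R (zdim n) p q)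
    & 0 <= qc R n (zdim n) x w alpha (W2 R n E i dm) (Spq R (zdim n) p q)].
Proof.
move=> x x_in w dp dm.
have Sw : sc R (w^T *m Spq R (zdim n) p q *m w)
          = 2 * (x i 0 ^+ 2 * x j 0 * x k 0).
  by rewrite sc_quad_Spq (zmap_mul x hpq) !rmorphM /= !mevalXU.
have SNw : sc R (w^T *m - Spq R (zdim n) p q *m w)
           = - (2 * (x i 0 ^+ 2 * x j 0 * x k 0)).
  by rewrite mulmxN mulNmx scN Sw.
have dpx : sc R (dp^T *m x) = x j 0 + x k 0.
  by rewrite linearD mulmxDl scD !sc_ebasis_dot.
have dmx : sc R (dm^T *m x) = x j 0 - x k 0.
  by rewrite linearB mulmxBl scD scN !sc_ebasis_dot.
have W1p := ellipsoid_W1_bound hE x_in i dp.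
have W2p := ellipsoid_W2_bound hE x_in i dp.
have W1m := ellipsoid_W1_bound hE x_in i dm.
have W2m := ellipsoid_W2_bound hE x_in i dm.
rewrite dpx in W1p W2p; rewrite dmx in W1m W2m.
have mulD := sqr_mulD_ge (x i 0) (x j 0) (x k 0).
have mulB := sqr_mulB_ge (x i 0) (x j 0) (x k 0).
rewrite !qcE SNw Sw -!lerBlDr !sub0r opprK.
by split; [apply: le_trans mulD _ | apply: le_trans mulD _
          | apply: le_trans mulB _ | apply: le_trans mulB _].
Qed.
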